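(* For every node $v\in\mathcal V$ and observed histories $(y,\tilde M_y)$, $(z,\tilde M_z)$ with $\Pr(\mathbf M[y]=\tilde M_y)>0$, $\Pr(\mathbf M[z]=\tilde M_z)>0$ and $(y,\tilde M_y)\subset(z,\tilde M_z)$, we have $\Delta(v\mid y,\tilde M_y)\ge\Delta(v\mid z,\tilde M_z)$.
   Context: Model (multi-seeding with intermediary constraints). $\mathcal G=(\mathcal V,\mathcal E)$ is a finite directed graph; for an arc $e=(u,v)$, $u$ is called the head node of $e$ and influence can pass from $u$ to $v$. Each arc $e$ has an influence probability $\bar w(e)\in[0,1]$ and each node $v$ has a reward $\mathbf r(v)\ge 0$. A seeding sequence is a finite sequence $y=(v_1,\dots,v_t)$ of nodes (repetitions allowed), $|y|=t$; $a@b$ denotes concatenation; $y\subset z$ for sequences means $y$ is a prefix of $z$. A realization matrix is an array $M=(M(e,j))_{e\in\mathcal E,\,j\ge 1}$ with entries in $\{0,1\}$; $M(e,j)$ is the realization of arc $e$ the $j$-th time $e$ is observed. The random realization matrix $\mathbf M$ has independent entries $\mathbf M(e,j)\sim\mathrm{Bernoulli}(\bar w(e))$. Given $y=(v_1,\dots,v_t)$ and $M$, rounds $\tau=1,\dots,t$ are run on graphs $\mathcal G_\tau=(\mathcal V,\mathcal E_\tau)$, $\mathcal E_1=\mathcal E$: in round $\tau$ the seed $v_\tau$ is activated and an independent-cascade diffusion runs on $\mathcal G_\tau$: each node activated in round $\tau$ observes each of its outgoing arcs $e\in\mathcal E_\tau$ once in that round; if $e$ was observed $k$ times before, its realization is $M(e,k+1)$;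 if it equals $1$, the other endpoint of $e$ becomes activated in round $\tau$. After round $\tau$, for every node activated in round $\tau$ other than $v_\tau$ (an intermediary), all arcs pointing into that node are removed, giving $\mathcal E_{\tau+1}$. The partial matrix $M[y]$ agrees with $M$ on the entries observed during this process and equals ''?'' elsewhere. The objective $f(y,M)=\sum_{v\in S}\mathbf r(v)$, where $S$ is the set of nodes $v$ with $v\in y$ or with some arc $(u,v)$ having an observed entry equal to $1$; $f(y,M)$ depends only on $(y,M[y])$ and is also written $f(y,\tilde M_y)$. An observed history is a pair $(y,\tilde M_y)$ where $\tilde M_y$ is a possible value of $\mathbf M[y]$. Sub-history: $(y,\tilde M_y)\subset(z,\tilde M_z)$ means $y\subset z$ and there exists a realization matrix $M$ with $M[y]=\tilde M_y$ and $M[z]=\tilde M_z$. The expected marginal gain is $\Delta(v\mid y,\tilde M_y)=\mathbb E[f(y@(v),\mathbf M)\mid \mathbf M[y]=\tilde M_y]-f(y,\tilde M_y)$. *)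

From HB Require Import structures.
From mathcomp Require Import all_boot all_order all_algebra.
From Stdlib Require Import ClassicalEpsilon.
Set Implicit Arguments. Unset Strict Implicit. Unset Printing Implicit Defensive.
Import Order.TTheory GRing.Theory Num.Theory.
Local Open Scope ring_scope.

Definition ind (R : pzRingType) (P : Prop) : R :=
  if excluded_middle_informative P then 1 else 0.

Section Model.
Variables (V : finType) (adj : rel V).

Definition garc : finType := {x : V * V | adj x.1 x.2}.
Definition src (e : garc) : V := (val e).1.
Definition dst (e : garc) : V := (val e).2.

(* Realization matrix; column index is 0-based: M e j is the paper's M(e, j+1). *)
Definition realization := garc -> nat -> bool.
(* Partial matrix: Some b = observed entry b, None = "?". *)
Definition pmatrix := garc -> nat -> option bool.

(* State before a round: number of times each garc was observed so far,
   and the set of nodes whose incoming arcs have been removed. *)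
Definition state := ((garc -> nat) * {set V})%type.

(* Nodes activated in the round with seed s: reachable from s through arcs
   of the current graph (garc not pointing into a removed node) whose next
   realization is 1. *)
Definition activated (M : realization) (st : state) (s : V) : {set V} :=
  [set x | connect (fun a b => [exists e : garc,
              [&& src e == a, dst e == b, dst e \notin st.2 & M e (st.1 e)]]) s x].

(* One round: every activated node observes each of its outgoing arcs of the
   current graph once; intermediaries (activated nodes other than the seed)
   get their incoming arcs removed. *)
Definition round (M : realization) (st : state) (s : V) : state :=
  let A := activated M st s in
  (fun e => (st.1 e + ((src e \in A) && (dst e \notin st.2)))%N, st.2 :|: (A :\ s)).

Definition run (M : realization) (y : seq V) : state :=
  foldl (round M) (fun _ => 0%N, set0) y.

Definition counts (M : realization) (y : seq V) : garc -> nat := (run M y).1.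

Definition partial (M : realization) (y : seq V) : pmatrix :=
  fun e j => if (j < counts M y e)%N then Some (M e j) else None.

Definition subhistory (y : seq V) (Mty : pmatrix) (z : seq V) (Mtz : pmatrix) : Prop :=
  prefix y z /\ exists M : realization, partial M y = Mty /\ partial M z = Mtz.

Variable R : realFieldType.

Definition fhist (r : V -> R) (y : seq V) (Mt : pmatrix) : R :=
  \sum_(v : V) r v * ind R ((v \in y) \/ exists e j, dst e = v /\ Mt e j = Some true).

Definition f (r : V -> R) (y : seq V) (M : realization) : R := fhist r y (partial M y).

(* Probability space: the first D columns of the realization matrix, with
   independent Bernoulli(w e) entries (the marginal of the law of M). *)
Definition fmat (D : nat) := {ffun garc * 'I_D -> bool}.

Definition weight (w : garc -> R) (D : nat) (m : fmat D) : R :=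
  \prod_(k : garc * 'I_D) (if m k then w k.1 else 1 - w k.1).

Definition ext (D : nat) (m : fmat D) : realization :=
  fun e j => if insub j is Some i then m (e, i) else false.

Definition prob (w : garc -> R) (D : nat) (y : seq V) (Mt : pmatrix) : R :=
  \sum_(m : fmat D) weight w m * ind R (partial (ext m) y = Mt).

Definition cond_exp (w : garc -> R) (r : V -> R) (D : nat) (v : V) (y : seq V)
    (Mt : pmatrix) : R :=
  (\sum_(m : fmat D) weight w m * ind R (partial (ext m) y = Mt)
       * f r (rcons y v) (ext m)) / prob w D y Mt.

Definition Delta (w : garc -> R) (r : V -> R) (D : nat) (v : V) (y : seq V)
    (Mt : pmatrix) : R :=
  cond_exp w r D v y Mt - fhist r y Mt.

End Model.

From HB Require Import structures.
From mathcomp Require Import all_boot all_order all_algebra.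
From Stdlib Require Import ClassicalEpsilon FunctionalExtensionality Classical.
From mathcomp Require Import zify ring.
Import Order.TTheory GRing.Theory Num.Theory.
Set Implicit Arguments. Unset Strict Implicit. Unset Printing Implicit Defensive.

(* Let c_y(e) and c_z(e) be the number of observations of
   arc e after seeding y and z.  Given two independent realizations M1
   (conditioned on M[z]) and M2 (conditioned on M[y]), exchange the entry of
   M1 in column c_z(e) with the entry of M2 in column c_y(e), for every arc e.
   This measure-preserving involution maps the conditioning events to
   themselves, and after it the round seeded by v after z reads exactly the
   entries that the round seeded by v after y reads.  Since more nodes have
   lost their incoming arcs after z, the nodes newly activated after z are
   activated after y as well, while every node already covered after y is
   also covered after z: the marginal gain after z is pointwise at most the
   one after y. *)

Lemma connect_agree (T : finType) (r1 r2 : rel T) s :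
  (forall a b, connect r1 s a -> r1 a b = r2 a b) -> connect r1 s =1 connect r2 s.
Proof.
move=> r12 x.
have path12 p a : connect r1 s a -> path r1 a p = path r2 a p.
  elim: p a => [//|b p IHp] a sa /=; rewrite -r12 //.
  by case r1ab: (r1 a b) => //=; apply: IHp; exact: connect_trans sa (connect1 r1ab).
apply/connectP/connectP=> -[p pth ->]; exists p => //.
  by rewrite -path12 // connect0.
by rewrite path12 // connect0.
Qed.

Lemma connect_last (T : finType) (e : rel T) s x :
  connect e s x -> x = s \/ exists2 a, connect e s a & e a x.
Proof.
move/connectP=> [p pth ->]; elim/last_ind: p pth => [|p b _]; first by left.
rewrite rcons_path last_rcons => /andP[pp rb]; right; exists (last s p) => //.
by apply/connectP; exists p.
Qed.

Section Diffusion.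
Variables (V : finType) (adj : rel V).
Implicit Types (M : realization adj) (st : state adj) (y t : seq V).

Lemma run_rcons M y s : run M (rcons y s) = round M (run M y) s.
Proof. by rewrite /run foldl_rcons. Qed.

Lemma run_cat M y t : run M (y ++ t) = foldl (round M) (run M y) t.
Proof. by rewrite /run foldl_cat. Qed.

Lemma removed_foldl M st t : st.2 \subset (foldl (round M) st t).2.
Proof.
elim: t st => [|s t IHt] st //=.
by apply: subset_trans (IHt _); rewrite /round /= subsetUl.
Qed.

Lemma counts_foldl M st t e :
  (st.1 e <= (foldl (round M) st t).1 e <= st.1 e + size t)%N.
Proof.
elim: t st => [|s t IHt] st /=; first by rewrite addn0 leqnn.
have /andP[lo hi] := IHt (round M st s); move: lo hi; rewrite /round /=.
by case: (_ && _) => /=; lia.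
Qed.

Lemma counts_bound M y e : (counts M y e <= size y)%N.
Proof. by have /andP[] := counts_foldl M (fun _ => 0%N, set0) y e. Qed.

Lemma counts_cat M y t e : (counts M y e <= counts M (y ++ t) e)%N.
Proof. by rewrite /counts run_cat; have /andP[] := counts_foldl M (run M y) t e. Qed.

Lemma removed_cat M y t : (run M y).2 \subset (run M (y ++ t)).2.
Proof. by rewrite run_cat removed_foldl. Qed.

Lemma run_det M M' y :
  (forall e j, (j < counts M y e)%N -> M e j = M' e j) -> run M y = run M' y.
Proof.
elim/last_ind: y => [//|y s IHy] MM'.
have run_y : run M y = run M' y.
  apply: IHy => e j lt_j; apply: MM'; apply: leq_trans lt_j _.
  by rewrite -cats1 counts_cat.
rewrite !run_rcons -run_y /round; set st := run M y.
suff -> : activated M' st s = activated M st s by [].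
apply/setP => x; rewrite !inE; apply/esym/connect_agree => a b sa.
apply: eq_existsb => e; case: (src e =P a) => //= se; case: (dst e == b) => //=.
case nre: (dst e \notin st.2) => //=; apply: MM'.
by rewrite /counts run_rcons /round /= -/st /activated inE se sa nre addn1.
Qed.

Lemma partial_det M M' y :
  (forall e j, (j < counts M y e)%N -> M e j = M' e j) -> partial M y = partial M' y.
Proof.
move=> MM'; have run_y := run_det MM'.
apply: functional_extensionality => e; apply: functional_extensionality => j.
by rewrite /partial /counts -run_y; case: ifP => // lt_j; rewrite MM'.
Qed.

Lemma counts_of_partial M M' y : partial M y = partial M' y -> counts M y = counts M' y.
Proof.
move=> MM'; apply: functional_extensionality => e.
have MM'e j := congr1 (fun Mt => Mt e j) MM'; rewrite /partial /= in MM'e.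
case: (ltngtP (counts M y e) (counts M' y e)) => // lt_c.
  by have := MM'e (counts M y e); rewrite ltnn lt_c.
by have := MM'e (counts M' y e); rewrite ltnn lt_c.
Qed.

Lemma agree_of_partial M M' y : partial M y = partial M' y ->
  forall e j, (j < counts M y e)%N -> M e j = M' e j.
Proof.
move=> MM' e j lt_j; have := congr1 (fun Mt => Mt e j) MM'.
by rewrite /partial /= -(counts_of_partial MM') lt_j => -[].
Qed.

Lemma partial_prefix M M' y t :
  partial M (y ++ t) = partial M' (y ++ t) -> partial M y = partial M' y.
Proof.
move/agree_of_partial=> MM'; apply: partial_det => e j lt_j.
by apply: MM'; apply: leq_trans lt_j (counts_cat _ _ _ _).
Qed.

Lemma partial_eq_agree M0 M M' y :
  (forall e j, (j < counts M0 y e)%N -> M e j = M' e j) ->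
  (partial M y = partial M0 y <-> partial M' y = partial M0 y).
Proof.
move=> MM'; split=> eq_y; rewrite -eq_y; apply/esym/partial_det => e j.
  by rewrite (counts_of_partial eq_y) => /MM'.
by rewrite (counts_of_partial eq_y) => /MM' ->.
Qed.

End Diffusion.

Local Open Scope ring_scope.

Lemma indT (R : pzRingType) (P : Prop) : P -> ind R P = 1.
Proof. by rewrite /ind; case: excluded_middle_informative. Qed.

Lemma indF (R : pzRingType) (P : Prop) : ~ P -> ind R P = 0.
Proof. by rewrite /ind; case: excluded_middle_informative. Qed.

Lemma ind_ge0 (R : numDomainType) (P : Prop) : 0 <= ind R P.
Proof. by rewrite /ind; case: excluded_middle_informative. Qed.

Lemma ind_iff (R : pzRingType) (P Q : Prop) : (P <-> Q) -> ind R P = ind R Q.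
Proof.
move=> PQ; rewrite /ind.
by do 2 case: excluded_middle_informative => //; move=> a b; exfalso; tauto.
Qed.

Lemma ler_ind_orB (R : numDomainType) (Pz Az Py Ay : Prop) :
  (Py -> Pz) -> (Az -> Ay) ->
  ind R (Pz \/ Az) - ind R Pz <= ind R (Py \/ Ay) - ind R Py.
Proof.
move=> PyPz AzAy; have [hz|nz] := classic Pz.
  rewrite (indT _ hz) (@indT _ (Pz \/ Az)) ?subrr; last by left.
  have [hy|ny] := classic Py; last by rewrite (indF _ ny) subr0 ind_ge0.
  by rewrite (indT _ hy) indT ?subrr //; left.
have ny : ~ Py by move/PyPz.
rewrite (indF _ nz) (indF _ ny) !subr0; have [ha|na] := classic Az.
  by rewrite (@indT _ (Pz \/ Az)) ?(@indT _ (Py \/ Ay)) //; right; [apply: AzAy|].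
by rewrite indF ?ind_ge0 //; case.
Qed.

Section Gain.
Variables (V : finType) (adj : rel V) (R : realFieldType) (r : V -> R) (v : V).
Implicit Types (M : realization adj) (y t : seq V).

Definition hit y (Mt : pmatrix adj) (u : V) : Prop :=
  (u \in y) \/ exists e j, dst e = u /\ Mt e j = Some true.

Definition gain y M : R := f r (rcons y v) M - fhist r y (partial M y).

Lemma hit_rcons M y u :
  hit (rcons y v) (partial M (rcons y v)) u <->
  hit y (partial M y) u \/ u \in activated M (run M y) v.
Proof.
rewrite /hit /partial /counts run_rcons /round /=.
set st := run M y; set A := activated M st v.
have vA : v \in A by rewrite inE connect0.
split.
- case=> [|[e [j [de]]]].
    by rewrite mem_rcons inE => /orP[/eqP ->|uy]; [right|left; left].
  case: ifP => // lt_j [Mej]; case: (ltnP j (st.1 e)) => old_j.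
    by left; right; exists e, j; split => //; rewrite old_j Mej.
  move: lt_j; rewrite addnC; case obs: (_ && _); last by rewrite ltnNge old_j.
  rewrite add1n ltnS => new_j.
  have {new_j old_j}ej : j = st.1 e by apply/eqP; rewrite eqn_leq new_j.
  move/andP: obs => [sA nre]; right; rewrite -de inE.
  apply: (connect_trans (y := src e)); first by move: sA; rewrite inE.
  by apply: connect1; apply/existsP; exists e; rewrite !eqxx nre -ej Mej.
- case=> [[uy|[e [j [de]]]]|uA].
  + by left; rewrite mem_rcons inE uy orbT.
  + case: ifP => // lt_j [Mej]; right; exists e, j; split => //.
    by rewrite (leq_trans lt_j) ?leq_addr // Mej.
  + move: (uA); rewrite inE => /connect_last [->|[a sa]].
      by left; rewrite mem_rcons mem_head.
    move=> /existsP[e /and4P[/eqP se /eqP de nre Me]].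
    right; exists e, (st.1 e); split => //.
    have -> : src e \in A by rewrite inE se.
    by rewrite nre addn1 ltnSn Me.
Qed.

Lemma gain_sum M y :
  gain y M = \sum_u r u * (ind R (hit y (partial M y) u \/
                                  u \in activated M (run M y) v)
                           - ind R (hit y (partial M y) u)).
Proof.
rewrite /gain /f /fhist -sumrB; apply: eq_bigr => u _; rewrite mulrBr.
by congr (_ * _ - _); apply: ind_iff; apply: hit_rcons.
Qed.

Lemma hit_cat M y t u : hit y (partial M y) u -> hit (y ++ t) (partial M (y ++ t)) u.
Proof.
case=> [uy|[e [j [de]]]]; first by left; rewrite mem_cat uy.
rewrite /partial; case: ifP => // lt_j Mej; right; exists e, j; split => //.
by rewrite (leq_trans lt_j (counts_cat _ _ _ _)).
Qed.

Lemma activated_cat M M' y t :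
  run M' y = run M y ->
  (forall e, M' e (counts M y e) = M e (counts M (y ++ t) e)) ->
  {subset activated M (run M (y ++ t)) v <= activated M' (run M' y) v}.
Proof.
move=> run_y next_y u; rewrite run_y !inE; apply: connect_sub => a b.
move=> /existsP[e /and4P[se de nre Me]]; apply: connect1; apply/existsP; exists e.
rewrite se de /= next_y Me andbT; apply: contra nre.
exact: (subsetP (removed_cat _ _ _)).
Qed.

Hypothesis r_ge0 : forall u, 0 <= r u.

Lemma gain_le_prefix M M' y t :
  partial M' y = partial M y ->
  (forall e, M' e (counts M y e) = M e (counts M (y ++ t) e)) ->
  gain (y ++ t) M <= gain y M'.
Proof.
move=> eq_y next_y.
have run_y : run M' y = run M y by apply: run_det; apply: agree_of_partial.
rewrite !gain_sum eq_y; apply: ler_sum => u _; apply: ler_wpM2l => //.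
apply: ler_ind_orB; first exact: hit_cat.
exact: activated_cat.
Qed.

End Gain.

Lemma mean_le_coupling (R : realFieldType) (I : finType) (a b F G : I -> R)
    (phi : I * I -> I * I) :
  injective phi -> 0 < \sum_i a i -> 0 < \sum_i b i ->
  (forall p, a (phi p).1 * b (phi p).2 * F (phi p).1 <= a p.1 * b p.2 * G p.2) ->
  (\sum_i a i * F i) / \sum_i a i <= (\sum_i b i * G i) / \sum_i b i.
Proof.
move=> phi_inj a_gt0 b_gt0 le_phi.
rewrite ler_pdivrMr // mulrAC ler_pdivlMr // !big_distrl /=.
under eq_bigr => i _ do rewrite big_distrr /=.
under [X in _ <= X]eq_bigr => j _ do rewrite big_distrr /=.
rewrite [X in _ <= X]exchange_big !pair_bigA (reindex_inj phi_inj) /=.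
apply: ler_sum => p _; move: (le_phi p).
by rewrite mulrAC [X in _ -> _ <= X]mulrC mulrA.
Qed.

Section Coupling.
Variables (V : finType) (adj : rel V) (R : realFieldType) (w : garc adj -> R) (D : nat).
Implicit Types (m : fmat adj D) (p : fmat adj D * fmat adj D).

Lemma ext_ord m e (i : 'I_D) : ext m e i = m (e, i).
Proof. by rewrite /ext valK. Qed.

Lemma ext_lt m e j (lt_jD : (j < D)%N) : ext m e j = m (e, Ordinal lt_jD).
Proof. by rewrite -ext_ord. Qed.

Lemma ext_ge m e j : (D <= j)%N -> ext m e j = false.
Proof. by move=> le_Dj; rewrite /ext insubN // -leqNgt. Qed.

Lemma weight_ge0 m : (forall e, 0 <= w e <= 1) -> 0 <= weight w m.
Proof.
move=> w01; apply: prodr_ge0 => k _; have /andP[w_ge0 w_le1] := w01 k.1.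
by case: (m k); rewrite ?subr_ge0.
Qed.

Definition bit_weight e (b : bool) : R := if b then w e else 1 - w e.

Lemma weight_split_at (c : garc adj -> nat) m : (forall e, (c e < D)%N) ->
  weight w m = (\prod_e bit_weight e (ext m e (c e))) *
               \prod_e \prod_(i | val i != c e) bit_weight e (m (e, i)).
Proof.
move=> lt_cD; rewrite /weight -big_split /=.
rewrite (eq_bigr (fun k => bit_weight k.1 (m (k.1, k.2)))); last by case.
rewrite -(pair_bigA _ (fun e i => bit_weight e (m (e, i)))) /=.
apply: eq_bigr => e _.
by rewrite (bigD1 (Ordinal (lt_cD e))) // (ext_lt _ _ (lt_cD e)).
Qed.

Variables (cz cy : garc adj -> nat).
Hypotheses (lt_czD : forall e, (cz e < D)%N) (lt_cyD : forall e, (cy e < D)%N).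

Definition swap_fst p : fmat adj D :=
  [ffun k => if val k.2 == cz k.1 then ext p.2 k.1 (cy k.1) else p.1 k].
Definition swap_snd p : fmat adj D :=
  [ffun k => if val k.2 == cy k.1 then ext p.1 k.1 (cz k.1) else p.2 k].
Definition swap p := (swap_fst p, swap_snd p).

Lemma ext_swap_fst_at p e : ext (swap_fst p) e (cz e) = ext p.2 e (cy e).
Proof. by rewrite (ext_lt _ _ (lt_czD e)) ffunE /= eqxx. Qed.

Lemma ext_swap_snd_at p e : ext (swap_snd p) e (cy e) = ext p.1 e (cz e).
Proof. by rewrite (ext_lt _ _ (lt_cyD e)) ffunE /= eqxx. Qed.

Lemma ext_swap_fst p e j : j != cz e -> ext (swap_fst p) e j = ext p.1 e j.
Proof.
move=> ne_j; have [lt_jD|le_Dj] := ltnP j D; last by rewrite !ext_ge.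
by rewrite !(ext_lt _ _ lt_jD) ffunE /= (negbTE ne_j).
Qed.

Lemma ext_swap_snd p e j : j != cy e -> ext (swap_snd p) e j = ext p.2 e j.
Proof.
move=> ne_j; have [lt_jD|le_Dj] := ltnP j D; last by rewrite !ext_ge.
by rewrite !(ext_lt _ _ lt_jD) ffunE /= (negbTE ne_j).
Qed.

Lemma swapK : involutive swap.
Proof.
case=> m1 m2; congr pair; apply/ffunP => -[e i]; rewrite ffunE /=.
  case: eqP => [eq_i|ne_i]; first by rewrite ext_swap_snd_at /= -eq_i ext_ord.
  by rewrite ffunE /= ifN //; apply/eqP.
case: eqP => [eq_i|ne_i]; first by rewrite ext_swap_fst_at /= -eq_i ext_ord.
by rewrite ffunE /= ifN //; apply/eqP.
Qed.

Lemma weight_swap p :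
  weight w (swap_fst p) * weight w (swap_snd p) = weight w p.1 * weight w p.2.
Proof.
rewrite (weight_split_at (swap_fst p) lt_czD) (weight_split_at (swap_snd p) lt_cyD).
rewrite (weight_split_at p.1 lt_czD) (weight_split_at p.2 lt_cyD).
rewrite (eq_bigr _ (fun e _ => congr1 (bit_weight e) (ext_swap_fst_at p e))).
rewrite (eq_bigr _ (fun e _ => congr1 (bit_weight e) (ext_swap_snd_at p e))).
rewrite [X in _ * X * _](eq_bigr (fun e => \prod_(i | val i != cz e)
    bit_weight e (p.1 (e, i)))); last first.
  by move=> e _; apply: eq_bigr => i ne_i; rewrite ffunE /= (negbTE ne_i).
rewrite [X in _ * (_ * X)](eq_bigr (fun e => \prod_(i | val i != cy e)
    bit_weight e (p.2 (e, i)))); last first.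
  by move=> e _; apply: eq_bigr => i ne_i; rewrite ffunE /= (negbTE ne_i).
ring.
Qed.

End Coupling.

Definition cond_weight (V : finType) (adj : rel V) (R : realFieldType)
    (w : garc adj -> R) (D : nat) (y : seq V) (Mt : pmatrix adj)
    (m : fmat adj D) : R :=
  weight w m * ind R (partial (ext m) y = Mt).

Definition cond_gain (V : finType) (adj : rel V) (R : realFieldType) (r : V -> R)
    (v : V) (y : seq V) (Mt : pmatrix adj) (D : nat) (m : fmat adj D) : R :=
  f r (rcons y v) (ext m) - fhist r y Mt.

Lemma Delta_mean (V : finType) (adj : rel V) (R : realFieldType) (w : garc adj -> R)
    (r : V -> R) (D : nat) (v : V) (y : seq V) (Mt : pmatrix adj) :
  prob w D y Mt != 0 ->
  Delta w r D v y Mt =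
    (\sum_(m : fmat adj D) cond_weight w y Mt m * cond_gain r v y Mt m)
      / \sum_(m : fmat adj D) cond_weight w y Mt m.
Proof.
rewrite /Delta /cond_exp /prob /cond_gain => P_neq0.
under [X in _ = X / _]eq_bigr => m _ do rewrite mulrBr.
rewrite sumrB -big_distrl /=.
by move: P_neq0; set P := \sum_m _; set E := \sum_m _ => P_neq0; field.
Qed.

Section SwapTerm.
Variables (V : finType) (adj : rel V) (R : realFieldType) (w : garc adj -> R).
Variables (r : V -> R) (v : V) (D : nat) (y t : seq V) (M0 : realization adj).
Hypotheses (w01 : forall e, 0 <= w e <= 1) (r_ge0 : forall u, 0 <= r u).
Hypothesis lt_sizeD : (size (y ++ t) < D)%N.

Lemma counts_cat_ltD e : (counts M0 (y ++ t) e < D)%N.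
Proof. exact: leq_ltn_trans (counts_bound _ _ _) lt_sizeD. Qed.

Lemma counts_ltD e : (counts M0 y e < D)%N.
Proof. exact: leq_ltn_trans (counts_cat M0 y t e) (counts_cat_ltD e). Qed.

Local Notation swap := (swap (counts M0 (y ++ t)) (counts M0 y)).
Local Notation z := (y ++ t).

Lemma swap_term_le (p : fmat adj D * fmat adj D) :
  cond_weight w z (partial M0 z) (swap p).1 * cond_weight w y (partial M0 y) (swap p).2
    * cond_gain r v z (partial M0 z) (swap p).1
  <= cond_weight w z (partial M0 z) p.1 * cond_weight w y (partial M0 y) p.2
    * cond_gain r v y (partial M0 y) p.2.
Proof.
rewrite /= /cond_weight /cond_gain.
set s1 := swap_fst _ _ p; set s2 := swap_snd _ _ p.
have E1 : partial (ext s1) z = partial M0 z <-> partial (ext p.1) z = partial M0 z.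
  by apply: partial_eq_agree => e j lt_j; apply: ext_swap_fst; rewrite neq_ltn lt_j.
have E2 : partial (ext s2) y = partial M0 y <-> partial (ext p.2) y = partial M0 y.
  by apply: partial_eq_agree => e j lt_j; apply: ext_swap_snd; rewrite neq_ltn lt_j.
rewrite (ind_iff _ E1) (ind_iff _ E2).
have [h1|n1] := classic (partial (ext p.1) z = partial M0 z); last first.
  by rewrite (indF _ n1) !(mulr0, mul0r).
have [h2|n2] := classic (partial (ext p.2) y = partial M0 y); last first.
  by rewrite (indF _ n2) !(mulr0, mul0r).
rewrite !indT // !mulr1 (weight_swap w counts_cat_ltD counts_ltD).
apply: ler_wpM2l; first by apply: mulr_ge0; apply: weight_ge0.
have s1_z := proj2 E1 h1; have s1_y := partial_prefix s1_z.
rewrite -s1_z -h2; apply: gain_le_prefix => // [|e]; first by rewrite h2 s1_y.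
rewrite (counts_of_partial s1_y) (counts_of_partial s1_z).
by rewrite (ext_swap_fst_at _ counts_cat_ltD).
Qed.

End SwapTerm.

Theorem lemma2 (R : realFieldType) (V : finType) (adj : rel V)
  (w : garc adj -> R) (r : V -> R)
  (hw : forall e, 0 <= w e <= 1) (hr : forall u, 0 <= r u)
  (D : nat) (v : V) (y z : seq V) (Mty Mtz : pmatrix adj)
  (hD : (size z < D)%N)
  (hy : 0 < prob w D y Mty) (hz : 0 < prob w D z Mtz)
  (hsub : subhistory y Mty z Mtz) :
  Delta w r D v z Mtz <= Delta w r D v y Mty.
Proof.
case: hsub hD hy hz => /prefixP[t ->] [M0 [<- <-]] hD hy hz.
rewrite !Delta_mean ?lt0r_neq0 //.
have swap_inj := inv_inj (swapK (counts_cat_ltD M0 hD) (counts_ltD M0 hD)).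
apply: (mean_le_coupling swap_inj); [exact: hz | exact: hy |].
exact: swap_term_le.
Qed.
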